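(* Let $\mathcal{G}_n$ be the random graph described in the context. For $\delta_n>0$, a configuration $\sigma:\mathcal{V}_n\to\{-1,1\}$, $k,l\in\{1,2\}$, $t\in\{-,+\}$ and $u\in\mathcal{V}_n^k$, let $$B_t^{k,l}(\sigma,u)=\Big\{\big|\hat Y_t^l(\sigma,u)-p_n(k,l)Y_t^l(\sigma)\big|\ge\sqrt{p_n(k,l)Y_t^l(\sigma)\delta_n}\Big\}.$$ Suppose $\gamma_n>0$, $\delta_n>0$ and $\xi_n\in(0,1)$ satisfy $$\lim_{n\to\infty}\delta_n=\infty,\qquad\lim_{n\to\infty}\frac{\delta_n}{\xi_n\lambda_n}=0,\qquad\lim_{n\to\infty}\frac{\delta_n}{\gamma_n}=\infty.$$ Fix $\zeta>0$ and $k,l\in\{1,2\}$, $s,t\in\{-,+\}$ with $(k,s)\neq(l,t)$. Then $$\max_{\sigma\in\Sigma_n(\zeta,\xi_n)}\frac{\gamma_n}{n}\sum_{u\in\mathcal{Y}_s^k(\sigma)}\mathbf{1}\{B_t^{k,l}(\sigma,u)\}\Rightarrow0\quad\text{as }n\to\infty.$$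
   Context: For each $n$, the node set $\mathcal{V}_n=\mathcal{V}_n^1\cup\mathcal{V}_n^2$ is a disjoint union of two communities of sizes $V_n^k=|\mathcal{V}_n^k|$ with $V_n^k/n\to v^k\in(0,\infty)$. The graph $\mathcal{G}_n$ is a stochastic block model: each unordered pair of distinct nodes is an edge independently with probability $p_n(k,l)$ for nodes in $\mathcal{V}_n^k$ and $\mathcal{V}_n^l$, where $p_n(k,k)=a_n=a\lambda_n/n$ and $p_n(k,l)=b_n=b\lambda_n/n$ for $k\ne l$, with constants $a>b>0$ and $\lambda_n\to\infty$. For a configuration $\sigma:\mathcal{V}_n\to\{-1,1\}$ and $s\in\{-,+\}$, $\mathcal{Y}_s^k(\sigma)=\{v\in\mathcal{V}_n^k:\sigma(v)=s1\}$, $Y_s^k(\sigma)=|\mathcal{Y}_s^k(\sigma)|$, and $\hat Y_s^k(\sigma,u)$ is the number of neighbors of $u$ in $\mathcal{Y}_s^k(\sigma)$. Magnetization: $z^k(\sigma)=\frac1{V_n^k}\sum_{u\in\mathcal{V}_n^k}\sigma(u)$, $z(\sigma)=(z^1(\sigma),z^2(\sigma))$. For a constant $\alpha\in\mathbb{R}$ and $\bar k=3-k$, let $\mathcal{L}^k(z)=(a-\alpha)v^kz^k+(b-\alpha)v^{\bar k}z^{\bar k}$ for $z\in\mathbb{R}^2$. For $\zeta>0$, $\xi\in(0,1)$: $\mathcal{A}(\zeta,\xi)=\{z\in[-1+\xi,1-\xi]^2:\min\{\mathcal{L}^1(z),-\mathcal{L}^2(z)\}\ge\zeta\}$ and $\Sigma_n(\zeta,\xi)=\{\sigma:\mathcal{V}_n\to\{-1,1\}\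 :\ z(\sigma)\in\mathcal{A}(\zeta,\xi)\}$. $\Rightarrow$ denotes weak convergence (here to the constant $0$). *)

From HB Require Import structures.
From mathcomp Require Import all_boot all_order all_algebra.
From mathcomp Require Import all_classical all_reals all_analysis.
Set Implicit Arguments. Unset Strict Implicit. Unset Printing Implicit Defensive.
Import Order.TTheory GRing.Theory Num.Theory.
Local Open Scope ring_scope.

(* Communities are indexed by 'I_2 : ord0 = community 1, ord_max = community 2.
   Spins are bool : true = +1, false = -1.  Nodes of G_n are 'I_(N n); the
   community of a node is given by cl : 'I_N -> 'I_2.  A (simple) graph is
   a set of 2-element subsets of nodes. *)

Definition other (k : 'I_2) : 'I_2 := if k == ord0 then ord_max else ord0.

Definition pn (R : realType) (a b : R) (lam : nat -> R) (n : nat) (k l : 'I_2) : R :=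
  (if k == l then a else b) * lam n / n%:R.

Definition Vk (N : nat) (cl : 'I_N -> 'I_2) (k : 'I_2) : nat := #|[set u | cl u == k]|.

Definition Yset (N : nat) (cl : 'I_N -> 'I_2) (sigma : {ffun 'I_N -> bool})
  (k : 'I_2) (s : bool) : {set 'I_N} := [set v | (cl v == k) && (sigma v == s)].

Definition adj (N : nat) (G : {set {set 'I_N}}) (u v : 'I_N) : bool := [set u; v] \in G.

Definition Yhat (N : nat) (cl : 'I_N -> 'I_2) (G : {set {set 'I_N}})
  (sigma : {ffun 'I_N -> bool}) (k : 'I_2) (s : bool) (u : 'I_N) : nat :=
  #|[set v in Yset cl sigma k s | adj G u v]|.

Definition spin (R : realType) (b : bool) : R := if b then 1 else -1.

Definition magn (R : realType) (N : nat) (cl : 'I_N -> 'I_2)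
  (sigma : {ffun 'I_N -> bool}) (k : 'I_2) : R :=
  ((Vk cl k)%:R)^-1 * \sum_(u | cl u == k) spin R (sigma u).

Definition Lk (R : realType) (a b alpha : R) (v : 'I_2 -> R) (z : 'I_2 -> R) (k : 'I_2) : R :=
  (a - alpha) * v k * z k + (b - alpha) * v (other k) * z (other k).

Definition inA (R : realType) (a b alpha : R) (v : 'I_2 -> R) (zeta xi : R)
  (z : 'I_2 -> R) : bool :=
  [forall k : 'I_2, (-1 + xi <= z k) && (z k <= 1 - xi)] &&
  (zeta <= Num.min (Lk a b alpha v z ord0) (- Lk a b alpha v z ord_max)).

Definition inSigma (R : realType) (a b alpha : R) (v : 'I_2 -> R) (zeta xi : R)
  (N : nat) (cl : 'I_N -> 'I_2) (sigma : {ffun 'I_N -> bool}) : bool :=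
  inA a b alpha v zeta xi (fun k => magn R cl sigma k).

(* the event B_t^{k,l}(sigma,u), for u in V^k, with p = p_n(k,l) *)
Definition Bevent (R : realType) (p delta : R) (N : nat) (cl : 'I_N -> 'I_2)
  (G : {set {set 'I_N}}) (sigma : {ffun 'I_N -> bool}) (l : 'I_2) (t : bool)
  (u : 'I_N) : bool :=
  Num.sqrt (p * (#|Yset cl sigma l t|)%:R * delta)
    <= `| (Yhat cl G sigma l t u)%:R - p * (#|Yset cl sigma l t|)%:R |.

(* max_{sigma in Sigma_n(zeta,xi_n)} gamma_n/n sum_{u in Y_s^k} 1{B_t^{k,l}(sigma,u)}
   (the max over an empty set is taken to be 0; all terms are >= 0) *)
Definition Xstat (R : realType) (a b alpha : R) (v : 'I_2 -> R) (zeta : R)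
  (lam gam del xi : nat -> R) (n N : nat) (cl : 'I_N -> 'I_2)
  (k l : 'I_2) (s t : bool) (G : {set {set 'I_N}}) : R :=
  \big[Num.max/0]_(sigma : {ffun 'I_N -> bool} | inSigma a b alpha v zeta (xi n) cl sigma)
    (gam n / n%:R *
     (#|[set u in Yset cl sigma k s | Bevent (pn a b lam n k l) (del n) cl G sigma l t u]|)%:R).

Definition pedge (R : realType) (a b : R) (lam : nat -> R) (n N : nat)
  (cl : 'I_N -> 'I_2) (e : {set 'I_N}) : R :=
  (if [forall u in e, forall w in e, cl u == cl w] then a else b) * lam n / n%:R.

(* law of the stochastic block model G_n: independent edges on unordered pairs *)
Definition SBMprob (R : realType) (a b : R) (lam : nat -> R) (n N : nat)
  (cl : 'I_N -> 'I_2) (G : {set {set 'I_N}}) : R :=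
  if [forall e in G, #|e| == 2] then
    \prod_(e : {set 'I_N} | #|e| == 2)
       (if e \in G then pedge a b lam n cl e else 1 - pedge a b lam n cl e)
  else 0.

Definition SBMexp (R : realType) (a b : R) (lam : nat -> R) (n N : nat)
  (cl : 'I_N -> 'I_2) (F : {set {set 'I_N}} -> R) : R :=
  \sum_(G : {set {set 'I_N}}) SBMprob a b lam n cl G * F G.

(* For a fixed configuration sigma the sets Y_s^k(sigma) and Y_t^l(sigma) are disjoint, so
   the degrees of the vertices of Y_s^k(sigma) into Y_t^l(sigma) are independent binomials
   with mean mu = p_n(k,l) Y_t^l(sigma).  An exponential moment (Chernoff) bound shows
   E exp(delta/8 #{u : B_t^{k,l}(sigma,u)}) <= 3^N as soon as delta <= 4 mu, which holds
   eventually because |z^l| <= 1 - xi_n forces Y_t^l(sigma) >= xi_n V^l / 2, so that mu is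
   of order xi_n lambda_n >> delta_n.  By Markov's inequality and a union bound over the 2^N
   configurations, the maximum exceeds eta with probability at most
   6^N exp(-delta_n eta n / (8 gamma_n)), which tends to 0 because delta_n / gamma_n -> oo. *)

From HB Require Import structures.
From mathcomp Require Import all_boot all_order all_algebra.
From mathcomp Require Import all_classical all_reals all_analysis.
From mathcomp Require Import ring lra.
Import Order.TTheory GRing.Theory Num.Theory.
Import numFieldNormedType.Exports.
Local Open Scope ring_scope.

Set Implicit Arguments. Unset Strict Implicit. Unset Printing Implicit Defensive.

Section RealInequalities.
Variable R : realType.
Implicit Types (x p mu th r D : R).

Lemma expR_le_quadratic x : x <= 1 / 2 -> expR x <= 1 + x + 2 * x ^+ 2.
Proof.
move=> x_le.
have le1 : expR x * (1 - x) <= 1.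
  have := ler_wpM2l (ltW (expR_gt0 x)) (expR_ge1Dx (- x)).
  by rewrite -expRD subrr expR0.
have := expR_gt0 x; nra.
Qed.

Lemma binomial_mgf_le p x (m : nat) : 0 <= p <= 1 ->
  (p * expR x + (1 - p)) ^+ m <= expR (p * m%:R * (expR x - 1)).
Proof.
move=> /andP[p0 p1]; rewrite mulrAC expRM_natr.
have ex0 := expR_gt0 x.
apply: lerXn2r; rewrite ?nnegrE ?expR_ge0 //; first nra.
by apply: le_trans (expR_ge1Dx _); lra.
Qed.

Lemma tilted_binomial_le p mu th r (m : nat) (sg : bool) :
  0 <= p <= 1 -> mu = p * m%:R -> 0 <= th <= 1 / 2 ->
  expR (- th * (spin R sg * mu + r)) * (p * expR (spin R sg * th) + (1 - p)) ^+ m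
    <= expR (2 * mu * th ^+ 2 - th * r).
Proof.
move=> p01 mu_def /andP[th0 th_le].
have mu0 : 0 <= mu by rewrite mu_def; case/andP: p01 => p0 _; exact: mulr_ge0.
apply: le_trans (ler_wpM2l (expR_ge0 _) (binomial_mgf_le _ m p01)) _.
rewrite -mu_def -expRD ler_expR.
have le_half : spin R sg * th <= 1 / 2 by case: sg; rewrite /spin; lra.
have sq : (spin R sg * th) ^+ 2 = th ^+ 2 by case: (sg); rewrite /spin ?mul1r ?mulN1r ?sqrrN.
have := expR_le_quadratic le_half; rewrite sq => quad.
have := ler_wpM2l mu0 (lerD (lerD (lexx (- 1)) quad) (lexx 0)); nra.
Qed.

Lemma tilted_tail_le p mu del th r (m : nat) (sg : bool) :
  0 <= p <= 1 -> mu = p * m%:R -> 0 <= th <= 1 / 2 ->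
  th * r = del / 4 -> 2 * mu * th ^+ 2 = del / 8 ->
  (expR (del / 8) - 1) *
    (expR (- th * (spin R sg * mu + r)) * (p * expR (spin R sg * th) + (1 - p)) ^+ m) <= 1.
Proof.
move=> p01 mu_def th01 th_r th_sq.
have mu0 : 0 <= mu by rewrite mu_def; case/andP: p01 => p0 _; exact: mulr_ge0.
have c0 : 0 <= expR (del / 8) - 1.
  rewrite subr_ge0 -[leLHS]expR0 ler_expR -th_sq; have := sqr_ge0 th; nra.
apply: le_trans (ler_wpM2l c0 (tilted_binomial_le r sg p01 mu_def th01)) _.
rewrite th_sq th_r mulrBl mul1r -expRD.
have -> : del / 8 + (del / 8 - del / 4) = 0 by field.
by rewrite expR0 lerBlDr lerDl expR_ge0.
Qed.

(* The tilt is [sqrt (mu del) / (4 mu)]; it is at most 1/2 exactly when [del <= 4 mu]. *)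
Lemma chernoff_tilt mu del : 0 < del -> del <= 4 * mu ->
  exists2 th, 0 <= th <= 1 / 2 &
    th * Num.sqrt (mu * del) = del / 4 /\ 2 * mu * th ^+ 2 = del / 8.
Proof.
move=> del0 del_le; have mu0 : 0 < mu by lra.
set r := Num.sqrt (mu * del).
have r2 : r ^+ 2 = mu * del by rewrite sqr_sqrtr // mulr_ge0 // ltW.
have th_sq : 2 * mu * (r / (4 * mu)) ^+ 2 = del / 8.
  by rewrite expr_div_n r2; field; rewrite gt_eqF.
have th0 : 0 <= r / (4 * mu) by rewrite divr_ge0 ?sqrtr_ge0 // mulr_ge0 // ltW.
exists (r / (4 * mu)).
  rewrite th0 /=; have : (r / (4 * mu)) ^+ 2 <= 1 / 4 by nra.
  nra.
split=> //.
by rewrite mulrAC -expr2 r2; field; rewrite gt_eqF.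
Qed.

Lemma indicator_le_tilted_tails th th' D mu r : 0 <= th -> 0 <= th' ->
  expR (th' * ((r <= `|D - mu|)%R : nat)%:R)
    <= 1 + (expR th' - 1) * (expR (th * (D - mu - r)) + expR (th * (mu - D - r))).
Proof.
move=> th0 th'0.
have c0 : 0 <= expR th' - 1 by rewrite subr_ge0 -expR0 ler_expR.
have e1 := expR_gt0 (th * (D - mu - r)); have e2 := expR_gt0 (th * (mu - D - r)).
have [dev|_] := leP r `|D - mu|; last by rewrite mulr0 expR0 lerDl mulr_ge0 // addr_ge0 // ltW.
rewrite mulr1 -lerBlDl -[X in X <= _]mulr1 ler_wpM2l //.
have [pos|neg] := lerP 0 (D - mu).
- rewrite ger0_norm // in dev.
  have : 1 <= expR (th * (D - mu - r)) by rewrite -expR0 ler_expR mulr_ge0 ?subr_ge0.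
  lra.
- rewrite ltr0_norm // in dev.
  have : 1 <= expR (th * (mu - D - r)) by rewrite -expR0 ler_expR mulr_ge0 // subr_ge0; lra.
  lra.
Qed.

Lemma six_le_expR3 : 6 <= expR 3 :> R.
Proof.
have e1 : 1 + 1 <= expR 1 :> R := expR_ge1Dx 1.
rewrite -[3]mulr1 expRM_natl; apply: le_trans (_ : 2 ^+ 3 <= _).
  by rewrite -natrX ler_nat.
by apply: lerXn2r; rewrite ?nnegrE ?expR_ge0 //; lra.
Qed.

End RealInequalities.

Lemma continuous_at0_dist_le (R : realType) (f : R -> R) (e : R) :
  continuous f -> 0 < e ->
  exists2 eta : R, 0 < eta & forall y, 0 <= y < eta -> `|f y - f 0| <= e.
Proof.
move=> fc e0; have /cvgrPdist_le/(_ e e0)/nbhs_ballP[eta eta0 ball_le] := fc 0.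
exists eta => // y /andP[y0 y_lt]; rewrite distrC; apply: ball_le.
by rewrite -ball_normE /ball_ /= sub0r normrN ger0_norm.
Qed.

Lemma dist_bigmax_le (R : realType) (I : finType) (P : pred I) (x : I -> R)
    (f : R -> R) (M eps eta c th : R) :
  (forall y, `|f y| <= M) -> (forall y, 0 <= y < eta -> `|f y - f 0| <= eps) ->
  0 < eta -> 0 < c -> 0 <= th -> 0 <= eps ->
  `|f (\big[Num.max/0]_(i | P i) (c * x i)) - f 0|
    <= eps + 2 * M * expR (- th * (eta / c)) * \sum_(i | P i) expR (th * x i).
Proof.
move=> fM feta eta0 c0 th0 eps0.
have M0 : 0 <= M := le_trans (normr_ge0 _) (fM 0).
have S0 : 0 <= \sum_(i | P i) expR (th * x i) by apply: sumr_ge0 => i _; exact: expR_ge0.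
set mx := \big[Num.max/0]_(i | P i) (c * x i).
have mx0 : 0 <= mx by apply/bigmax_geP; left.
have [small|large] := ltP mx eta.
  apply: le_trans (feta mx _) _; first by rewrite mx0.
  by rewrite lerDl mulr_ge0 // mulr_ge0 ?expR_ge0 // mulr_ge0.
have [|[i Pi eta_le]] := bigmax_geP _ _ _ _ large; first lra.
have one_le : 1 <= expR (- th * (eta / c)) * expR (th * x i).
  rewrite -expRD -expR0 ler_expR mulNr addrC subr_ge0 ler_wpM2l //.
  by rewrite ler_pdivrMr // mulrC.
apply: le_trans (_ : 2 * M <= _).
  by apply: le_trans (ler_normB _ _) _; have := fM 0; have := fM mx; lra.
rewrite -[X in X <= _]add0r lerD //.
rewrite -mulrA -[X in X <= _]mulr1 ler_wpM2l ?mulr_ge0 //.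
apply: le_trans one_le _; rewrite ler_wpM2l ?expR_ge0 //.
by rewrite (bigD1 i) //= lerDl sumr_ge0 // => j _; exact: expR_ge0.
Qed.

Lemma natr_card_setI_pred (R : nzSemiRingType) (T : finType) (P Q : pred T) :
  #|[set u | P u && Q u]|%:R = \sum_(u | P u) (Q u)%:R :> R.
Proof.
rewrite -sum1_card natr_sum [LHS]big_mkcond [RHS]big_mkcond /=.
by apply: eq_bigr => u _; rewrite inE; case: (P u); case: (Q u).
Qed.

Lemma sum_option_bool (R : nmodType) (F : option bool -> R) :
  \sum_j F j = F None + F (Some true) + F (Some false).
Proof.
rewrite (bigD1 None) //= (bigD1 (Some true)) //= (bigD1 (Some false)) //=.
by rewrite big_pred0 ?addr0 ?addrA // => -[[]|].
Qed.

Lemma set2_inj_disjoint (T : finType) (A B : {set T}) : [disjoint A & B] ->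
  {in [pred x : T * T | (x.1 \in A) && (x.2 \in B)] &, injective (fun x => [set x.1; x.2])}.
Proof.
move=> dAB [u v] [u' v'] /andP[/= uA vB] /andP[/= u'A v'B] /= uv_eq.
have : u \in [set u'; v'] by rewrite -uv_eq set21.
have : v \in [set u'; v'] by rewrite -uv_eq set22.
case/set2P=> [vu'|->]; first by move: (disjointFr dAB u'A); rewrite -vu' vB.
by case/set2P=> [->//|uv']; move: (disjointFr dAB uA); rewrite uv' v'B.
Qed.

Section StochasticBlockModel.
Variables (R : realType) (a b : R) (lam : nat -> R) (n N : nat) (cl : 'I_N -> 'I_2).
Local Notation pe := (pedge a b lam n cl).
Local Notation E := (SBMexp a b lam n cl).

Definition edge_weight (e : {set 'I_N}) (present : bool) : R :=
  if #|e| == 2 then (if present then pe e else 1 - pe e) else (if present then 0 else 1).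

Lemma edge_weightTF e : edge_weight e true + edge_weight e false = 1.
Proof. by rewrite /edge_weight; case: ifP => _; rewrite ?subrKC ?add0r. Qed.

Lemma SBMprobE G : SBMprob a b lam n cl G = \prod_e edge_weight e (e \in G).
Proof.
rewrite /SBMprob; case: ifP => [/forallP G2 | /negbT].
  rewrite [RHS](bigID (fun e : {set 'I_N} => #|e| == 2)) /= [X in _ * X]big1 ?mulr1.
    by apply: eq_bigr => e e2; rewrite /edge_weight e2.
  move=> e /negbTE e_not2; rewrite /edge_weight e_not2.
  by case: ifP => // eG; move: (G2 e); rewrite eG e_not2.
rewrite negb_forall => /existsP[e]; rewrite negb_imply => /andP[eG /negbTE e_not2].
by rewrite (bigD1 e) //= /edge_weight e_not2 eG mul0r.
Qed.

Lemma SBMexp_prod (H : {set 'I_N} -> bool -> R) :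
  E (fun G => \prod_e H e (e \in G)) =
  \prod_e (edge_weight e true * H e true + edge_weight e false * H e false).
Proof.
rewrite bigA_distr /SBMexp; apply: eq_bigr => G _.
by rewrite SBMprobE -big_split; apply: eq_bigr => e _; case: (e \in G).
Qed.

Lemma SBMexp_sum (I : finType) (P : pred I) (F : I -> {set {set 'I_N}} -> R) :
  E (fun G => \sum_(i | P i) F i G) = \sum_(i | P i) E (F i).
Proof. by rewrite /SBMexp; under eq_bigr do rewrite mulr_sumr; exact: exchange_big. Qed.

Lemma SBMexpZ c F : E (fun G => c * F G) = c * E F.
Proof. by rewrite /SBMexp mulr_sumr; apply: eq_bigr => G _; rewrite mulrCA. Qed.

Lemma SBMexpD F1 F2 : E (fun G => F1 G + F2 G) = E F1 + E F2.
Proof. by rewrite /SBMexp -big_split; apply: eq_bigr => G _; rewrite mulrDr. Qed.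

Lemma SBMexp1 : E (fun _ => 1) = 1.
Proof.
have := SBMexp_prod (fun _ _ => 1); rewrite big1 // => ->.
by apply: big1 => e _; rewrite !mulr1 edge_weightTF.
Qed.

Lemma SBMexp_cst c : E (fun _ => c) = c.
Proof. by have := SBMexpZ c (fun _ => 1); rewrite SBMexp1 !mulr1. Qed.

Lemma SBMexp_prod_pairs (A B : {set 'I_N}) (phi : 'I_N -> 'I_N -> bool -> R) :
  [disjoint A & B] ->
  E (fun G => \prod_(u in A) \prod_(v in B) phi u v (adj G u v)) =
  \prod_(u in A) \prod_(v in B)
    (pe [set u; v] * phi u v true + (1 - pe [set u; v]) * phi u v false).
Proof.
move=> dAB; pose P (x : 'I_N * 'I_N) := (x.1 \in A) && (x.2 \in B).
have by_pair (F : 'I_N -> 'I_N -> R) : \prod_(u in A) \prod_(v in B) F u v =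
    \prod_(e : {set 'I_N}) \prod_(x | P x && ([set x.1; x.2] == e)) F x.1 x.2.
  by rewrite pair_big (partition_big (fun x => [set x.1; x.2]) predT).
pose H e present := \prod_(x | P x && ([set x.1; x.2] == e)) phi x.1 x.2 present.
transitivity (E (fun G => \prod_e H e (e \in G))).
  apply: congr1; apply: funext => G; rewrite by_pair.
  by apply: eq_bigr => e _; apply: eq_bigr => x /andP[_ /eqP <-].
rewrite SBMexp_prod by_pair; apply: eq_bigr => e _.
have [x0 /andP[/andP[x0A x0B] /eqP x0e] | none] :=
  pickP (fun x => P x && ([set x.1; x.2] == e)); last first.
  by rewrite /H !big_pred0 // !mulr1 edge_weightTF.
have only_x0 : (fun x => P x && ([set x.1; x.2] == e)) =1 pred1 x0.
  move=> x /=; apply/idP/eqP => [/andP[Px /eqP xe]|->]; last by rewrite /P x0A x0B x0e eqxx.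
  by apply: (set2_inj_disjoint dAB) => //; rewrite ?inE ?x0A ?x0B // xe x0e.
have x0_ne : x0.1 != x0.2 by apply: contraTneq x0B => <-; rewrite (disjointFr dAB x0A).
by rewrite /H !(big_pred1 x0) // /edge_weight -x0e cards2 x0_ne.
Qed.

Lemma SBMexp_prod_sum_pairs (J : finType) (j0 : J) (A B : {set 'I_N})
    (c : 'I_N -> J -> R) (phi : 'I_N -> J -> 'I_N -> bool -> R) :
  [disjoint A & B] ->
  E (fun G => \prod_(u in A) \sum_j (c u j * \prod_(v in B) phi u j v (adj G u v))) =
  \prod_(u in A) \sum_j (c u j * \prod_(v in B)
    (pe [set u; v] * phi u j v true + (1 - pe [set u; v]) * phi u j v false)).
Proof.
move=> dAB; rewrite (big_distr_big j0).
transitivity (E (fun G => \sum_(g in pffun_on j0 (mem A) predT)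
    \prod_(u in A) (c u (g u) * \prod_(v in B) phi u (g u) v (adj G u v)))).
  by apply: congr1; apply: funext => G; rewrite (big_distr_big j0).
rewrite SBMexp_sum; apply: eq_bigr => g _.
under eq_fun do rewrite big_split /=.
rewrite SBMexpZ big_split /=; congr (_ * _).
exact: (SBMexp_prod_pairs (fun u => phi u (g u)) dAB).
Qed.

Hypothesis pe01 : forall e, 0 <= pe e <= 1.

Lemma SBMprob_ge0 G : 0 <= SBMprob a b lam n cl G.
Proof.
rewrite SBMprobE; apply: prodr_ge0 => e _; have /andP[p0 p1] := pe01 e.
by rewrite /edge_weight; case: ifP => _; case: (e \in G); rewrite ?subr_ge0.
Qed.

Lemma ler_SBMexp F1 F2 : (forall G, F1 G <= F2 G) -> E F1 <= E F2.
Proof. by move=> le12; apply: ler_sum => G _; rewrite ler_wpM2l ?SBMprob_ge0. Qed.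

Lemma SBMexp_norm_le F : `|E F| <= E (fun G => `|F G|).
Proof.
apply: le_trans (ler_norm_sum _ _ _) _; apply: ler_sum => G _.
by rewrite normrM ger0_norm ?SBMprob_ge0.
Qed.

End StochasticBlockModel.

Definition deviates (R : realType) (N : nat) (p del : R) (G : {set {set 'I_N}})
    (B : {set 'I_N}) (u : 'I_N) : bool :=
  Num.sqrt (p * #|B|%:R * del) <= `|#|[set v in B | adj G u v]|%:R - p * #|B|%:R|.

(* The bound of [indicator_le_tilted_tails], written as a sum over [j : option bool] of
   products over the edges, so that it factors through [SBMexp_prod_sum_pairs]: [None] is
   the constant term, [Some true] and [Some false] the upper and lower tails. *)
Definition tilt_coef (R : realType) (c th mu r : R) (j : option bool) : R :=
  if j is Some sg then c * expR (- th * (spin R sg * mu + r)) else 1.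

Definition tilt_factor (R : realType) (th : R) (j : option bool) (present : bool) : R :=
  if j is Some sg then (if present then expR (spin R sg * th) else 1) else 1.

Lemma exp_count_deviates_le (R : realType) N (p del th th' : R) (A B : {set 'I_N}) G :
  0 <= th -> 0 <= th' ->
  expR (th' * #|[set u in A | deviates p del G B u]|%:R) <=
  \prod_(u in A) \sum_j
    (tilt_coef (expR th' - 1) th (p * #|B|%:R) (Num.sqrt (p * #|B|%:R * del)) j *
     \prod_(v in B) tilt_factor th j (adj G u v)).
Proof.
move=> th0 th'0; rewrite natr_card_setI_pred mulr_sumr expR_sum.
apply: ler_prod => u uA; rewrite expR_ge0 sum_option_bool.
set c := expR th' - 1; set mu := p * #|B|%:R; set r := Num.sqrt (mu * del).
set D : R := #|[set v in B | adj G u v]|%:R.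
have constant_term : tilt_coef c th mu r None * \prod_(v in B) tilt_factor th None (adj G u v) = 1.
  by rewrite big1 ?mulr1.
have tilt_prod sg : \prod_(v in B) tilt_factor th (Some sg) (adj G u v) = expR (spin R sg * th * D).
  rewrite /D natr_card_setI_pred mulr_sumr expR_sum.
  by apply: eq_bigr => v _; rewrite /tilt_factor; case: (adj G u v); rewrite ?mulr1 ?mulr0 ?expR0.
rewrite constant_term !tilt_prod /tilt_coef -!mulrA -!expRD.
apply: le_trans (indicator_le_tilted_tails D mu r th0 th'0) _.
rewrite mulrDr addrA le_eqVlt; apply/orP; left; apply/eqP.
by congr (_ + _ * expR _ + _ * expR _); rewrite /spin; ring.
Qed.

Lemma SBMexp_exp_count_deviates_le (R : realType) (a b : R) lam n N (cl : 'I_N -> 'I_2)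
    (A B : {set 'I_N}) (p del : R) :
  (forall e, 0 <= pedge a b lam n cl e <= 1) ->
  [disjoint A & B] -> {in A & B, forall u v, pedge a b lam n cl [set u; v] = p} ->
  0 <= p <= 1 -> 0 < del -> del <= 4 * (p * #|B|%:R) ->
  SBMexp a b lam n cl (fun G => expR (del / 8 * #|[set u in A | deviates p del G B u]|%:R))
    <= 3 ^+ #|A|.
Proof.
move=> pe01 dAB peAB p01 del0 del_le.
set mu := p * #|B|%:R; set r := Num.sqrt (mu * del).
have [th th01 [th_r th_sq]] := chernoff_tilt del0 del_le.
have th0 : 0 <= th by case/andP: th01.
apply: le_trans (ler_SBMexp pe01 (fun G => exp_count_deviates_le p del A B G th0
  (divr_ge0 (ltW del0) (ler0n _ 8)))) _.
rewrite (SBMexp_prod_sum_pairs a b lam n cl None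
  (fun _ => tilt_coef (expR (del / 8) - 1) th mu r) (fun _ j _ => tilt_factor th j) dAB).
rewrite -prodr_const.
apply: ler_prod => u uA; rewrite sum_option_bool.
pose tail sg := tilt_coef (expR (del / 8) - 1) th mu r (Some sg) *
  \prod_(v in B) (pedge a b lam n cl [set u; v] * tilt_factor th (Some sg) true +
    (1 - pedge a b lam n cl [set u; v]) * tilt_factor th (Some sg) false).
have tail_ge0 sg : 0 <= tail sg.
  have c0 : 0 <= expR (del / 8) - 1.
    by rewrite subr_ge0 -[leLHS]expR0 ler_expR divr_ge0 // ltW.
  apply: mulr_ge0; first by rewrite /= mulr_ge0 ?expR_ge0.
  apply: prodr_ge0 => v _; have /andP[p0 p1] := pe01 [set u; v].
  by apply: addr_ge0; apply: mulr_ge0; rewrite /= ?subr_ge0 ?expR_ge0 ?ler01.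
have tail_le sg : tail sg <= 1.
  rewrite /tail (eq_bigr (fun=> p * expR (spin R sg * th) + (1 - p))); last first.
    by move=> v vB; rewrite peAB // mulr1.
  by rewrite /= prodr_const -mulrA; apply: tilted_tail_le.
have constant_term : tilt_coef (expR (del / 8) - 1) th mu r None *
    \prod_(v in B) (pedge a b lam n cl [set u; v] * tilt_factor th None true +
      (1 - pedge a b lam n cl [set u; v]) * tilt_factor th None false) = 1.
  by rewrite mul1r big1 // => v _; rewrite !mulr1 subrKC.
rewrite constant_term -/(tail true) -/(tail false).
have := tail_le true; have := tail_le false; have := tail_ge0 true; have := tail_ge0 false.
lra.
Qed.

Lemma Yset_disjoint N (cl : 'I_N -> 'I_2) sg k l s t :
  (k, s) <> (l, t) -> [disjoint Yset cl sg k s & Yset cl sg l t].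
Proof.
move=> ks_ne; rewrite -setI_eq0; apply/eqP/setP => u; rewrite !inE.
apply/negP => /andP[/andP[/eqP uk /eqP us] /andP[/eqP ul /eqP ut]].
by apply: ks_ne; rewrite -uk -us ul ut.
Qed.

Lemma pedge_set2 (R : realType) (a b : R) lam n N (cl : 'I_N -> 'I_2) u v :
  pedge a b lam n cl [set u; v] = pn a b lam n (cl u) (cl v).
Proof.
rewrite /pedge /pn; congr (_ * _ / _); congr (if _ then _ else _).
apply/forall_inP/eqP => [same | uv x /set2P x_uv].
  by apply/eqP/(forall_inP (same u (set21 u v))); exact: set22.
by apply/forall_inP => w /set2P w_uv; case: x_uv => ->; case: w_uv => ->; rewrite ?uv.
Qed.

Lemma Yset_card_ge (R : realType) N (cl : 'I_N -> 'I_2) sg l t (xi : R) :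
  -1 + xi <= magn R cl sg l <= 1 - xi -> xi * (Vk cl l)%:R / 2 <= #|Yset cl sg l t|%:R.
Proof.
set V : R := (Vk cl l)%:R; set Y : R := #|Yset cl sg l true|%:R.
have V_sum : V = \sum_(u | cl u == l) 1 by rewrite /V /Vk -sum1dep_card natr_sum.
have Y_sum b : #|Yset cl sg l b|%:R = \sum_(u | cl u == l) (sg u == b)%:R :> R.
  exact: natr_card_setI_pred.
have Y_false : #|Yset cl sg l false|%:R = V - Y.
  rewrite Y_sum /Y Y_sum V_sum -sumrB; apply: eq_bigr => u _.
  by case: (sg u) => /=; lra.
have spin_sum : \sum_(u | cl u == l) spin R (sg u) = 2 * Y - V.
  rewrite /Y Y_sum V_sum mulr_sumr -sumrB; apply: eq_bigr => u _.
  by rewrite /spin; case: (sg u) => /=; lra.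
rewrite /magn spin_sum -/V => /andP[lo hi].
have [V0|V_pos] := eqVneq V 0; first by rewrite V0 mulr0 mul0r ler0n.
have V_gt0 : 0 < V by rewrite lt_neqAle eq_sym V_pos ler0n.
have mV : V^-1 * (2 * Y - V) * V = 2 * Y - V by rewrite mulrAC mulVf ?mul1r.
have lo' := ler_wpM2r (ltW V_gt0) lo; have hi' := ler_wpM2r (ltW V_gt0) hi.
rewrite mV in lo' hi'.
by case: t; rewrite ?Y_false; lra.
Qed.

Lemma SBMexp_dist_Xstat_le (R : realType) (a b alpha zeta : R) (v : 'I_2 -> R)
    (lam gam del xi : nat -> R) n N (cl : 'I_N -> 'I_2) k l s t
    (f : R -> R) (M eps eta : R) :
  (forall e, 0 <= pedge a b lam n cl e <= 1) -> 0 <= pn a b lam n k l <= 1 ->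
  (k, s) <> (l, t) ->
  (forall sg, inSigma a b alpha v zeta (xi n) cl sg ->
     del n <= 4 * (pn a b lam n k l * #|Yset cl sg l t|%:R)) ->
  (forall x, `|f x| <= M) -> (forall x, 0 <= x < eta -> `|f x - f 0| <= eps) ->
  0 < eta -> 0 <= eps -> 0 < gam n -> 0 < del n -> (0 < n)%N ->
  `|SBMexp a b lam n cl (fun G => f (Xstat a b alpha v zeta lam gam del xi n cl k l s t G))
      - f 0|
    <= eps + 2 * M * expR (- (del n / 8) * (eta * n%:R / gam n)) * 6 ^+ N.
Proof.
move=> pe01 pn01 ks_ne mean_ge fM feta eta0 eps0 gam0 del0 n0.
have M0 : 0 <= M := le_trans (normr_ge0 _) (fM 0).
have c0 : 0 < gam n / n%:R by rewrite divr_gt0 // ltr0n.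
have th0 : 0 <= del n / 8 by rewrite divr_ge0 // ltW.
set X := Xstat a b alpha v zeta lam gam del xi n cl k l s t.
have -> : SBMexp a b lam n cl (fun G => f (X G)) - f 0 =
    SBMexp a b lam n cl (fun G => f (X G) - f 0) by rewrite SBMexpD SBMexp_cst.
apply: le_trans (SBMexp_norm_le pe01 _) _.
apply: le_trans (ler_SBMexp pe01 (fun G => dist_bigmax_le _ _ fM feta eta0 c0 th0 eps0)) _.
have -> : eta / (gam n / n%:R) = eta * n%:R / gam n by rewrite invf_div mulrA.
rewrite SBMexpD SBMexp_cst SBMexpZ SBMexp_sum lerD2l.
rewrite ler_wpM2l ?mulr_ge0 ?expR_ge0 //.
apply: le_trans (_ : \sum_(sg : {ffun 'I_N -> bool}) 3 ^+ N <= _); last first.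
  rewrite sumr_const card_ffun card_bool card_ord -[_ *+ 2 ^ N]mulr_natr.
  by rewrite natrX -exprMn -natrM.
rewrite [leLHS]big_mkcond /=; apply: ler_sum => sg _.
case: ifP => [inS|_]; last exact: exprn_ge0.
apply: le_trans (_ : _ <= 3 ^+ #|Yset cl sg k s|) _.
  apply: SBMexp_exp_count_deviates_le pe01 (Yset_disjoint cl sg ks_ne) _ pn01 del0 (mean_ge _ inS).
  by move=> u w; rewrite !inE => /andP[/eqP <- _] /andP[/eqP <- _]; exact: pedge_set2.
rewrite ler_eXn2l ?ltr1n //; have := max_card (mem (Yset cl sg k s)); by rewrite card_ord.
Qed.

Lemma block_weight_01 (R : realType) (a b : R) (lam : nat -> R) n (same : bool) :
  0 <= b <= a -> 0 <= lam n -> a * lam n / n%:R <= 1 ->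
  0 <= (if same then a else b) * lam n / n%:R <= 1.
Proof.
move=> /andP[b0 ba] lam0; rewrite -!mulrA => a_le.
have x0 : 0 <= lam n / n%:R by rewrite divr_ge0.
by case: same; apply/andP; split; nra.
Qed.

Lemma Vk_sum N (cl : 'I_N -> 'I_2) : (Vk cl ord0 + Vk cl ord_max)%N = N.
Proof.
rewrite /Vk; have -> : [set u | cl u == ord_max] = ~: [set u | cl u == ord0].
  by apply/setP => u; rewrite !inE; case: (cl u) => -[|[|]].
by rewrite cardsC card_ord.
Qed.

Local Open Scope classical_set_scope.
Local Open Scope ring_scope.

Lemma card_ratio_cvg (R : realType) (N : nat -> nat) (cl : forall n, 'I_(N n) -> 'I_2)
    (v : 'I_2 -> R) :
  (forall j, (fun n => (Vk (cl n) j)%:R / n%:R) @ \oo --> v j) ->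
  (fun n => (N n)%:R / n%:R) @ \oo --> v ord0 + v ord_max.
Proof.
move=> V_cvg; have -> : (fun n => (N n)%:R / n%:R) =
    (fun n => (Vk (cl n) ord0)%:R / n%:R + (Vk (cl n) ord_max)%:R / n%:R :> R).
  by apply: funext => n; rewrite -mulrDl -natrD Vk_sum.
exact: cvgD.
Qed.

Lemma near_del_le_mean (R : realType) (N : nat -> nat) (cl : forall n, 'I_(N n) -> 'I_2)
    (v : 'I_2 -> R) (a b alpha zeta : R) (lam del xi : nat -> R) (k l : 'I_2) (t : bool) :
  0 < v l -> (fun n => (Vk (cl n) l)%:R / n%:R) @ \oo --> v l ->
  0 < b -> b <= a -> lam @ \oo --> +oo -> (forall n, 0 < xi n) ->
  (fun n => del n / (xi n * lam n)) @ \oo --> 0 ->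
  \forall n \near \oo, forall sg, inSigma a b alpha v zeta (xi n) (cl n) sg ->
    del n <= 4 * (pn a b lam n k l * #|Yset (cl n) sg l t|%:R).
Proof.
move=> vl0 Vl_cvg b0 ba lam_cvg xi0 ratio_cvg.
have vl2 : 0 < v l / 2 by rewrite divr_gt0.
have bvl : 0 < b * v l by rewrite mulr_gt0.
near=> n => sg /andP[/forallP/(_ l) xi_bounds _].
have lam0 : 0 < lam n by near: n; move/cvgryPgt: lam_cvg; apply.
have Vl_ge : v l / 2 < (Vk (cl n) l)%:R / n%:R.
  have : `|v l - (Vk (cl n) l)%:R / n%:R| < v l / 2 by near: n; move/cvgrPdist_lt: Vl_cvg; apply.
  rewrite ltr_norml => /andP[_]; lra.
have ratio_lt : del n / (xi n * lam n) < b * v l.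
  have : `|0 - del n / (xi n * lam n)| < b * v l by near: n; move/cvgrPdist_lt: ratio_cvg; apply.
  by rewrite sub0r normrN => /(le_lt_trans (ler_norm _)).
have n_gt0 : 0 < n%:R :> R.
  by rewrite ltr0n lt0n; apply: contraTneq Vl_ge => ->; rewrite invr0 mulr0 -leNgt ltW.
have xilam : 0 < xi n * lam n by rewrite mulr_gt0.
have Y_ge := Yset_card_ge t xi_bounds.
have V_ge : v l / 2 * n%:R < (Vk (cl n) l)%:R.
  by rewrite -ltr_pdivlMr.
have del_lt : del n < b * v l * (xi n * lam n) by rewrite -ltr_pdivrMr.
have pn_ge : b * (lam n / n%:R) <= pn a b lam n k l.
  rewrite /pn -mulrA; apply: ler_wpM2r; first by rewrite divr_ge0 ?ltW.
  by case: ifP => _; lra.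
set Y : R := #|Yset (cl n) sg l t|%:R in Y_ge *; set V : R := (Vk (cl n) l)%:R in Y_ge V_ge.
have q_n : lam n / n%:R * n%:R = lam n by rewrite mulfVK ?gt_eqF.
have bq0 : 0 <= b * (lam n / n%:R) by rewrite mulr_ge0 ?divr_ge0 ?ltW.
have step1 := ler_wpM2l bq0 Y_ge.
have step2 := ler_wpM2l bq0 (ler_wpM2l (ltW (xi0 n)) (ltW V_ge)).
have Y_bound : b * v l * (xi n * lam n) <= 4 * (b * (lam n / n%:R) * Y).
  rewrite -[in leLHS]q_n; set q := lam n / n%:R in step1 step2 *; nra.
apply: (le_trans (ltW del_lt)); apply: le_trans Y_bound _.
by rewrite ler_pM2l //; apply: ler_wpM2r.
Unshelve. all: end_near.
Qed.

Lemma near_tail_le (R : realType) (N : nat -> nat) (w : R) (gam del : nat -> R)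
    (M eps eta : R) :
  (fun n => (N n)%:R / n%:R) @ \oo --> w -> (forall n, 0 < gam n) ->
  (fun n => del n / gam n) @ \oo --> +oo -> 0 <= M -> 0 < eps -> 0 < eta ->
  \forall n \near \oo, 2 * M * expR (- (del n / 8) * (eta * n%:R / gam n)) * 6 ^+ N n <= eps.
Proof.
move=> N_cvg gam0 ratio_cvg M0 eps0 eta0.
set C := `|w| + 1.
have C0 : 0 < C by rewrite /C ltr_wpDl.
near=> n.
have N_lt : (N n)%:R / n%:R < C.
  have : `|w - (N n)%:R / n%:R| < 1 by near: n; move/cvgrPdist_lt: N_cvg; apply.
  have := ler_norm w; rewrite ltr_norml => wle /andP[lo _]; rewrite /C; lra.
have ratio_gt : 8 * (3 * C + 1) / eta < del n / gam n.
  by near: n; move/cvgryPgt: ratio_cvg; apply.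
have n_gt : 2 * M / eps < n%:R by near: n; exact: nbhs_infty_gtr.
have n0 : 0 < n%:R :> R by apply: le_lt_trans n_gt; rewrite divr_ge0 ?mulr_ge0 // ltW.
have exponent : - (del n / 8) * (eta * n%:R / gam n) + 3 * (N n)%:R <= - n%:R.
  have e1 : del n / 8 * (eta * n%:R / gam n) = del n / gam n * (eta * n%:R / 8).
    by field; rewrite gt_eqF.
  have e2 : 8 * (3 * C + 1) / eta * (eta * n%:R / 8) = (3 * C + 1) * n%:R.
    by field; rewrite gt_eqF.
  have h1 := ler_wpM2r (x := eta * n%:R / 8) (divr_ge0 (mulr_ge0 (ltW eta0) (ltW n0)) (ler0n _ 8))
    (ltW ratio_gt).
  have h2 : (N n)%:R < C * n%:R by rewrite -ltr_pdivrMr.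
  rewrite mulNr e1; rewrite e2 in h1; lra.
apply: le_trans (_ : 2 * M * expR (- n%:R) <= _).
  rewrite -mulrA ler_wpM2l ?mulr_ge0 //.
  apply: le_trans (ler_wpM2l (expR_ge0 _) (_ : 6 ^+ N n <= expR (3 * (N n)%:R))) _.
    by rewrite mulrC expRM_natl; apply: lerXn2r; rewrite ?nnegrE ?expR_ge0 ?six_le_expR3.
  by rewrite -expRD ler_expR.
rewrite expRN ler_pdivrMr ?expR_gt0 //.
have := expR_ge1Dx (n%:R : R); move: n_gt; rewrite ltr_pdivrMr // => n_gt; nra.
Unshelve. all: end_near.
Qed.

Unset Implicit Arguments. Set Strict Implicit. Set Printing Implicit Defensive.

Theorem lemmaB3 (R : realType)
  (N : nat -> nat) (cl : forall n, 'I_(N n) -> 'I_2) (v : 'I_2 -> R)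
  (a b alpha zeta : R) (lam gam del xi : nat -> R)
  (k l : 'I_2) (s t : bool) :
  (forall j, 0 < v j) ->
  (forall j, (fun n => (Vk (cl n) j)%:R / n%:R) @ \oo --> v j) ->
  0 < b -> b < a ->
  lam @ \oo --> +oo ->
  (forall n, a * lam n / n%:R <= 1) ->
  (forall n, 0 < gam n) -> (forall n, 0 < del n) -> (forall n, 0 < xi n < 1) ->
  del @ \oo --> +oo ->
  (fun n => del n / (xi n * lam n)) @ \oo --> 0 ->
  (fun n => del n / gam n) @ \oo --> +oo ->
  0 < zeta ->
  (k, s) <> (l, t) ->
  forall f : R -> R, continuous f -> (exists M : R, forall x, `|f x| <= M) ->
  (fun n => SBMexp a b lam n (cl n)
              (fun G => f (Xstat a b alpha v zeta lam gam del xi n (cl n) k l s t G)))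
    @ \oo --> f 0.
Proof.
move=> v0 V_cvg b0 ba lam_cvg a_le gam0 del0 xi01 _ ratio_cvg dg_cvg _ ks_ne f fc [M fM].
have M0 : 0 <= M := le_trans (normr_ge0 _) (fM 0).
have ab : 0 <= b <= a by rewrite !ltW.
have xi0 n : 0 < xi n by case/andP: (xi01 n).
apply/cvgrPdist_le => eps eps0; have eps2 : 0 < eps / 2 by rewrite divr_gt0.
have [eta eta0 feta] := continuous_at0_dist_le fc eps2.
have mean := near_del_le_mean alpha zeta k t (v0 l) (V_cvg l) b0 (ltW ba) lam_cvg xi0 ratio_cvg.
have tail := near_tail_le (card_ratio_cvg V_cvg) gam0 dg_cvg M0 eps2 eta0.
near=> n.
have lam0 : 0 <= lam n by apply: ltW; near: n; move/cvgryPgt: lam_cvg; apply.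
have pe01 e : 0 <= pedge a b lam n (cl n) e <= 1 by exact: block_weight_01.
have pn01 : 0 <= pn a b lam n k l <= 1 by exact: block_weight_01.
have n0 : (0 < n)%N by near: n; exact: nbhs_infty_gt.
rewrite distrC; apply: le_trans (SBMexp_dist_Xstat_le pe01 pn01 ks_ne _ fM feta eta0
  (ltW eps2) (gam0 n) (del0 n) n0) _; first by near: n.
have : 2 * M * expR (- (del n / 8) * (eta * n%:R / gam n)) * 6 ^+ N n <= eps / 2.
  by near: n.
lra.
Unshelve. all: end_near.
Qed.
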